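(* Let $y>0$ and $\mathscr{C}_n(y)=\displaystyle\int_0^y\frac{t\sinh t}{t^2+\pi^2n^2}\,dt$ for $n\in\mathbb{Z}$. Then the discrete Hilbert transform of $(\mathscr{C}_n(y))_{n\in\mathbb{Z}}$, i.e. the sequence $\frac{1}{\pi}\sum_{m\in\mathbb{Z}\setminus\{0\}}\frac{\mathscr{C}_{n-m}(y)}{m}$, is given by \[ \mathscr{D}_n(y)=\frac{1}{\pi n}\Bigl(\sinh y-\frac{y^2\sinh y}{y^2+\pi^2n^2}\Bigr)\quad(n\neq0),\qquad \mathscr{D}_0(y)=0. \] *)

From Stdlib Require Import Reals Lra ZArith.
From Coquelicot Require Import Coquelicot.
Open Scope R_scope.

Definition Cn (n : Z) (y : R) : R :=
  RInt (fun t => t * sinh t / (t ^ 2 + PI ^ 2 * (IZR n) ^ 2)) 0 y.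

Definition Dn (n : Z) (y : R) : R :=
  if Z.eqb n 0 then 0
  else / (PI * IZR n) * (sinh y - y ^ 2 * sinh y / (y ^ 2 + PI ^ 2 * (IZR n) ^ 2)).

(* the m-th pair of terms (m >= 1) of sum over m in Z\{0} of C_{n-m}(y)/m:
   C_{n-m}/m + C_{n+m}/(-m) *)
Definition hilb_pair (n : Z) (y : R) (m : nat) : R :=
  (Cn (n - Z.of_nat m) y - Cn (n + Z.of_nat m) y) / INR m.

Definition hilb_partial (n : Z) (y : R) (N : nat) : R :=
  / PI * sum_n_m (hilb_pair n y) 1 N.

From Stdlib Require Import Reals Lra Lia ZArith.
From Coquelicot Require Import Coquelicot.
Open Scope R_scope.

(* Write w_t(x) = 1 / (t^2 + pi^2 x^2), so that C_k(y) is the integral over [0, y] of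
   t sinh t w_t(k). For n = p > 0, partial fractions turn the integrand of
   (C_{p-m} - C_{p+m}) / m into pi^2 t sinh t w_t(p) (h(p-m) + h(p+m)), where
   h(x) = (p + x) w_t(x). Summed over 1 <= m <= N, this runs over the window
   [p-N, p+N]; moving it to [-N, N] costs 2p boundary terms of size O(1/N), and on
   [-N, N] the odd part of h cancels, leaving p times a partial sum of
   coth t / t = 1/t^2 + 2 sum_{k>=1} w_t(k). That expansion comes from the Fourier
   cosine coefficients of cosh(t (2s - 1)) on [0, 1/2] and the Riemann-Lebesgue lemma
   applied to the Dirichlet kernel, and converges at rate O(1/N) uniformly in
   t in (0, y]. The limit integrand is the derivative of pi^2 p sinh t w_t(p), whose
   integral is pi D_p(y). Summability follows from |C_j(y)| <= y^2 sinh y / (pi j)^2,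
   and n <= 0 reduces to n > 0 because C_{-j} = C_j. *)

Lemma continuous_of_continuity_pt (f : R -> R) (x : R) :
  continuity_pt f x -> continuous f x.
Proof. apply continuity_pt_filterlim. Qed.

Lemma continuous_sin_lin (lam x : R) : continuous (fun s => sin (lam * s)) x.
Proof. apply (ex_derive_continuous (V := R_NormedModule)); auto_derive; auto. Qed.

(* Coquelicot states these for an abstract normed module; the copies below keep the
   equalities at type [R], where [ring], [field] and [lra] apply. The annotation [:> R]
   on later equations between sums serves the same purpose. *)
Lemma is_RInt_ext_R (f g : R -> R) (a b l : R) :
  (forall x, Rmin a b < x < Rmax a b -> f x = g x) -> is_RInt f a b l -> is_RInt g a b l.
Proof. apply (is_RInt_ext (V := R_NormedModule)). Qed.

Lemma ex_RInt_ext_R (f g : R -> R) (a b : R) :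
  (forall x, Rmin a b < x < Rmax a b -> f x = g x) -> ex_RInt f a b -> ex_RInt g a b.
Proof. apply (ex_RInt_ext (V := R_NormedModule)). Qed.

Lemma is_RInt_plus_R (f g : R -> R) (a b If Ig : R) :
  is_RInt f a b If -> is_RInt g a b Ig -> is_RInt (fun s => f s + g s) a b (If + Ig).
Proof. apply (is_RInt_plus (V := R_NormedModule)). Qed.

Lemma is_RInt_minus_R (f g : R -> R) (a b If Ig : R) :
  is_RInt f a b If -> is_RInt g a b Ig -> is_RInt (fun s => f s - g s) a b (If - Ig).
Proof. apply (is_RInt_minus (V := R_NormedModule)). Qed.

Lemma is_RInt_scal_R (f : R -> R) (a b k If : R) :
  is_RInt f a b If -> is_RInt (fun s => k * f s) a b (k * If).
Proof. apply (is_RInt_scal (V := R_NormedModule)). Qed.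

Lemma is_RInt_const_R (a b c : R) : is_RInt (fun _ => c) a b ((b - a) * c).
Proof. apply (is_RInt_const (V := R_NormedModule)). Qed.

Lemma sum_n_m_1_O (f : nat -> R) : sum_n_m f 1 0 = 0.
Proof. apply (sum_n_m_zero (G := R_AbelianMonoid)). lia. Qed.

Lemma sum_n_m_1_S (f : nat -> R) (N : nat) :
  sum_n_m f 1 (S N) = sum_n_m f 1 N + f (S N).
Proof. apply (sum_n_Sm (G := R_AbelianMonoid)). lia. Qed.

Lemma sum_n_m_mult_l_R (c : R) (f : nat -> R) (n m : nat) :
  sum_n_m (fun k => c * f k) n m = c * sum_n_m f n m.
Proof. apply (sum_n_m_mult_l (K := R_Ring)). Qed.

Lemma sum_n_m_ext_R (f g : nat -> R) (n m : nat) :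
  (forall k, (n <= k <= m)%nat -> f k = g k) -> sum_n_m f n m = sum_n_m g n m.
Proof. intros Hfg. apply sum_n_m_ext_loc, Hfg. Qed.

Lemma sum_n_m_plus_R (f g : nat -> R) (n m : nat) :
  sum_n_m (fun k => f k + g k) n m = sum_n_m f n m + sum_n_m g n m.
Proof. apply (sum_n_m_plus (G := R_AbelianMonoid)). Qed.

Lemma is_RInt_sum_n_m_1 (f : nat -> R -> R) (l : nat -> R) (a b : R) (N : nat) :
  (forall k, (1 <= k)%nat -> is_RInt (f k) a b (l k)) ->
  is_RInt (fun s => sum_n_m (fun k => f k s) 1 N) a b (sum_n_m l 1 N).
Proof.
  intros Hf. induction N as [| N IH].
  - rewrite sum_n_m_1_O, <- (Rmult_0_r (b - a)).
    apply (is_RInt_ext_R (fun _ => 0)); [intros; rewrite sum_n_m_1_O; reflexivity|].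
    apply is_RInt_const_R.
  - rewrite sum_n_m_1_S.
    apply (is_RInt_ext_R (fun s => sum_n_m (fun k => f k s) 1 N + f (S N) s));
      [intros; rewrite sum_n_m_1_S; reflexivity|].
    apply (is_RInt_plus_R _ _ _ _ _ _ IH), Hf. lia.
Qed.

Lemma sum_n_m_telescope (g : R -> R) (p : nat) :
  sum_n_m (fun i => g (INR i) - g (INR i - 1)) 1 p = g (INR p) - g 0 :> R.
Proof.
  induction p as [| p IH].
  - rewrite sum_n_m_1_O. simpl. ring.
  - rewrite sum_n_m_1_S, IH. cbv beta. rewrite S_INR.
    replace (INR p + 1 - 1) with (INR p) by ring. ring.
Qed.

Lemma sum_n_m_1_bound (f : nat -> R) (p : nat) (c : R) :
  (forall i, (1 <= i <= p)%nat -> 0 <= f i <= c) -> 0 <= sum_n_m f 1 p <= INR p * c.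
Proof.
  induction p as [| p IH]; intros Hf.
  - rewrite sum_n_m_1_O. simpl. lra.
  - rewrite sum_n_m_1_S, S_INR.
    pose proof (IH (fun i Hi => Hf i ltac:(lia))). pose proof (Hf (S p) ltac:(lia)). lra.
Qed.

Lemma is_RInt_abs_le_const_open (f : R -> R) (a b l M : R) : a <= b -> is_RInt f a b l ->
  (forall t, a < t < b -> Rabs (f t) <= M) -> Rabs l <= (b - a) * M.
Proof.
  intros ab f_int f_bound.
  assert (f_ex : ex_RInt f a b) by (exists l; exact f_int).
  rewrite <- (is_RInt_unique _ _ _ _ f_int).
  assert (const : forall c : R, RInt (fun _ => c) a b = (b - a) * c)
    by (intros c; apply (RInt_const (V := R_CompleteNormedModule))).
  apply Rabs_le. split.
  - replace (- ((b - a) * M)) with ((b - a) * - M) by ring. rewrite <- const.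
    apply RInt_le; [exact ab | apply ex_RInt_const | exact f_ex |].
    intros t Ht. pose proof (f_bound t Ht) as Hb. apply Rabs_le_between in Hb. lra.
  - rewrite <- const.
    apply RInt_le; [exact ab | exact f_ex | apply ex_RInt_const |].
    intros t Ht. pose proof (f_bound t Ht) as Hb. apply Rabs_le_between in Hb. lra.
Qed.

Lemma is_lim_seq_of_rate (u : nat -> R) (l c : R) (N0 : nat) :
  (forall N, (N0 <= N)%nat -> Rabs (u N - l) <= c / INR N) -> is_lim_seq u l.
Proof.
  intros rate.
  assert (inv_lim : is_lim_seq (fun N => c / INR N) 0).
  { replace (Finite 0) with (Rbar_mult c (Rbar_inv p_infty)) by (simpl; f_equal; ring).
    apply is_lim_seq_scal_l, is_lim_seq_inv; [apply is_lim_seq_INR | discriminate]. }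
  apply (is_lim_seq_le_le_loc (fun N => l - c / INR N) _ (fun N => l + c / INR N)).
  - exists N0. intros N HN. pose proof (rate N HN) as HuN.
    apply Rabs_le_between in HuN. lra.
  - replace (Finite l) with (Finite (l - 0)) by (f_equal; ring).
    apply is_lim_seq_minus'; [apply is_lim_seq_const | exact inv_lim].
  - replace (Finite l) with (Finite (l + 0)) by (f_equal; ring).
    apply is_lim_seq_plus'; [apply is_lim_seq_const | exact inv_lim].
Qed.

Lemma is_series_telescoping (a : nat -> R) (l : R) :
  is_lim_seq a l -> is_series (fun k => a k - a (S k)) (a O - l).
Proof.
  intros a_lim.
  assert (partial : forall N, sum_n (fun k => a k - a (S k)) N = a O - a (S N)).
  { induction N as [| N IH]; [apply sum_O|]. rewrite sum_Sn, IH. unfold plus; simpl. ring. }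
  change (is_lim_seq (sum_n (fun k => a k - a (S k))) (a O - l)).
  apply (is_lim_seq_ext (fun N => a O - a (S N))); [intros; symmetry; apply partial|].
  apply is_lim_seq_minus'; [apply is_lim_seq_const | apply (is_lim_seq_incr_1 a l), a_lim].
Qed.

Lemma ex_series_le_R (a b : nat -> R) :
  (forall k, Rabs (a k) <= b k) -> ex_series b -> ex_series a.
Proof. apply (ex_series_le (V := R_CompleteNormedModule)). Qed.

Lemma ex_series_inv_sq : ex_series (fun k => / INR (S k) ^ 2).
Proof.
  apply (ex_series_le_R _ (fun k => 2 * (/ INR (S k) - / INR (S (S k))))).
  - intros k. rewrite Rabs_pos_eq by (apply Rlt_le, Rinv_0_lt_compat, pow_lt, lt_0_INR; lia).
    rewrite !S_INR. pose proof (pos_INR k).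
    replace (2 * (/ (INR k + 1) - / (INR k + 1 + 1))) with (/ ((INR k + 1) * (INR k + 2) / 2))
      by (field; lra).
    apply Rinv_le_contravar; [apply Rdiv_lt_0_compat; nra | nra].
  - apply (ex_series_scal_l (V := R_NormedModule) 2).
    eexists. apply (is_series_telescoping (fun k => / INR (S k)) 0).
    replace (Finite 0) with (Rbar_inv p_infty) by reflexivity.
    apply is_lim_seq_inv; [| discriminate].
    apply (is_lim_seq_incr_1 INR), is_lim_seq_INR.
Qed.

Lemma sinh_pos (t : R) : 0 < t -> 0 < sinh t.
Proof. intros t_gt0. rewrite <- sinh_0. apply sinh_lt, t_gt0. Qed.

Lemma sinh_le (a b : R) : a <= b -> sinh a <= sinh b.
Proof. intros [a_lt_b | ->]; [left; apply sinh_lt, a_lt_b | right; reflexivity]. Qed.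

Lemma mul_sinh_le (t y : R) : 0 <= t <= y -> 0 <= t * sinh t <= y * sinh y.
Proof.
  intros [t_ge0 t_le_y]. pose proof (sinh_le 0 t t_ge0). pose proof (sinh_le t y t_le_y).
  rewrite sinh_0 in *. split; [nra | apply Rmult_le_compat; lra].
Qed.

Lemma Rdiv_lt_of_div_lt (a m x : R) : 0 < a -> 0 < m -> a / m < x -> 0 < a / x < m.
Proof.
  intros a_gt0 m_gt0 Hx. pose proof (Rdiv_lt_0_compat a m a_gt0 m_gt0).
  split; [apply Rdiv_lt_0_compat; lra|].
  unfold Rdiv. replace m with (a * / (a / m)) by (field; lra).
  apply Rmult_lt_compat_l; [lra|]. apply Rinv_lt_contravar; [nra | lra].
Qed.

(** * The Riemann-Lebesgue lemma *)

Section RiemannLebesgue.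

Variables (q : R -> R) (L : R).
Hypothesis q_cont : forall s, 0 <= s <= L -> continuity_pt q s.

Let continuous_q_shift d s : 0 <= s + d <= L -> continuous (fun s => q (s + d)) s.
Proof.
  intros Hs. apply (continuous_comp (fun s => s + d) q).
  - apply (ex_derive_continuous (V := R_NormedModule)); auto_derive; auto.
  - apply continuous_of_continuity_pt, q_cont, Hs.
Qed.

Let ex_RInt_q_sin lam a b : 0 <= a -> a <= b -> b <= L ->
  ex_RInt (fun s => q s * sin (lam * s)) a b.
Proof.
  intros a0 ab bL. apply (ex_RInt_continuous (V := R_CompleteNormedModule)).
  rewrite Rmin_left, Rmax_right by lra. intros s sab.
  apply (continuous_mult q); [|apply continuous_sin_lin].
  apply continuous_of_continuity_pt, q_cont; lra.
Qed.

Let ex_RInt_q_shift_sin lam d a b : 0 <= a + d -> a <= b -> b + d <= L ->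
  ex_RInt (fun s => q (s + d) * sin (lam * s)) a b.
Proof.
  intros a0 ab bL. apply (ex_RInt_continuous (V := R_CompleteNormedModule)).
  rewrite Rmin_left, Rmax_right by lra. intros s sab.
  apply (continuous_mult (fun s => q (s + d))); [|apply continuous_sin_lin].
  apply continuous_q_shift; lra.
Qed.

(* Shifting by half a period [d = PI / lam] flips the sign of [sin (lam * s)]. *)
Lemma RInt_sin_half_period lam : 0 < lam -> PI / lam <= L ->
  let d := PI / lam in
  2 * RInt (fun s => q s * sin (lam * s)) 0 L =
    RInt (fun s => (q s - q (s + d)) * sin (lam * s)) 0 (L - d)
    + RInt (fun s => q s * sin (lam * s)) (L - d) L
    - RInt (fun s => q (s + d) * sin (lam * s)) (- d) 0.
Proof.
  intros lam_gt0 dL d; fold d in dL.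
  assert (d_gt0 : 0 < d) by (apply Rdiv_lt_0_compat; [apply PI_RGT_0 | lra]).
  set (g := fun s => q s * sin (lam * s)).
  set (gd := fun s => q (s + d) * sin (lam * s)).
  assert (shift : RInt g 0 L = - RInt gd (- d) (L - d)).
  { rewrite <- (RInt_opp (V := R_CompleteNormedModule)) by (apply ex_RInt_q_shift_sin; lra).
    pose proof (RInt_comp_lin (V := R_CompleteNormedModule) g 1 d (- d) (L - d)) as comp_lin.
    replace (1 * - d + d) with 0 in comp_lin by ring.
    replace (1 * (L - d) + d) with L in comp_lin by ring.
    rewrite <- comp_lin by (apply ex_RInt_q_sin; lra).
    apply RInt_ext. intros s _. unfold g, gd, scal, opp; simpl; unfold mult; simpl.
    replace (lam * (1 * s + d)) with (lam * s + PI) by (unfold d; field; lra).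
    rewrite !Rmult_1_l, sin_plus, sin_PI, cos_PI. ring. }
  assert (split_g : RInt g 0 L = RInt g 0 (L - d) + RInt g (L - d) L).
  { symmetry. apply (RInt_Chasles (V := R_CompleteNormedModule)); apply ex_RInt_q_sin; lra. }
  assert (split_gd : RInt gd (- d) (L - d) = RInt gd (- d) 0 + RInt gd 0 (L - d)).
  { symmetry. apply (RInt_Chasles (V := R_CompleteNormedModule));
      apply ex_RInt_q_shift_sin; lra. }
  assert (diff : RInt (fun s => (q s - q (s + d)) * sin (lam * s)) 0 (L - d)
                 = RInt g 0 (L - d) - RInt gd 0 (L - d)).
  { rewrite <- (RInt_minus (V := R_CompleteNormedModule));
      [| apply ex_RInt_q_sin; lra | apply ex_RInt_q_shift_sin; lra].
    apply RInt_ext. intros s _. unfold g, gd, minus, plus, opp; simpl. ring. }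
  lra.
Qed.

Lemma RInt_sin_bound lam e B : 0 < lam -> PI / lam <= L ->
  (forall s, 0 <= s <= L - PI / lam -> Rabs (q s - q (s + PI / lam)) <= e) ->
  (forall s, 0 <= s <= L -> Rabs (q s) <= B) ->
  2 * Rabs (RInt (fun s => q s * sin (lam * s)) 0 L)
    <= (L - PI / lam) * e + 2 * (PI / lam) * B.
Proof.
  intros lam_gt0 dL q_unif q_bound.
  pose proof (RInt_sin_half_period lam lam_gt0 dL) as split; simpl in split.
  set (d := PI / lam) in *.
  assert (d_gt0 : 0 < d) by (apply Rdiv_lt_0_compat; [apply PI_RGT_0 | lra]).
  assert (sin_bound : forall x, Rabs (sin x) <= 1) by (intros; apply Rabs_le, SIN_bound).
  assert (bound_diff : Rabs (RInt (fun s => (q s - q (s + d)) * sin (lam * s)) 0 (L - d))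
                       <= (L - d - 0) * e).
  { apply abs_RInt_le_const; [lra| |].
    - apply (ex_RInt_continuous (V := R_CompleteNormedModule)).
      rewrite Rmin_left, Rmax_right by lra. intros s Hs.
      apply (continuous_mult (fun s => q s - q (s + d))); [|apply continuous_sin_lin].
      apply (continuous_minus q (fun s => q (s + d))); [|apply continuous_q_shift; lra].
      apply continuous_of_continuity_pt, q_cont; lra.
    - intros s Hs. rewrite Rabs_mult, <- (Rmult_1_r e).
      apply Rmult_le_compat; try apply Rabs_pos; [apply q_unif; lra | apply sin_bound]. }
  assert (bound_right : Rabs (RInt (fun s => q s * sin (lam * s)) (L - d) L) <= (L - (L - d)) * B).
  { apply abs_RInt_le_const; [lra | apply ex_RInt_q_sin; lra |].
    intros s Hs. rewrite Rabs_mult, <- (Rmult_1_r B).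
    apply Rmult_le_compat; try apply Rabs_pos; [apply q_bound; lra | apply sin_bound]. }
  assert (bound_left : Rabs (RInt (fun s => q (s + d) * sin (lam * s)) (- d) 0) <= (0 - - d) * B).
  { apply abs_RInt_le_const; [lra | apply ex_RInt_q_shift_sin; lra |].
    intros s Hs. rewrite Rabs_mult, <- (Rmult_1_r B).
    apply Rmult_le_compat; try apply Rabs_pos; [apply q_bound; lra | apply sin_bound]. }
  rewrite <- (Rabs_pos_eq 2) at 1 by lra. rewrite <- Rabs_mult, split.
  unfold Rminus at 1. eapply Rle_trans; [apply Rabs_triang|].
  rewrite Rabs_Ropp. pose proof (Rabs_triang
    (RInt (fun s => (q s - q (s + d)) * sin (lam * s)) 0 (L - d))
    (RInt (fun s => q s * sin (lam * s)) (L - d) L)).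
  lra.
Qed.

Theorem riemann_lebesgue : 0 < L ->
  is_lim (fun lam => RInt (fun s => q s * sin (lam * s)) 0 L) p_infty 0.
Proof.
  intros L_gt0. apply is_lim_spec. intros [eps eps_gt0]; simpl.
  destruct (Heine q (fun s => 0 <= s <= L) (compact_P3 0 L) q_cont
              (mkposreal (eps / L) (Rdiv_lt_0_compat _ _ eps_gt0 L_gt0)))
    as [delta q_unif]; simpl in q_unif.
  destruct (continuity_ab_maj (fun s => Rabs (q s)) 0 L) as [smax [q_le_max smax_in]].
  { lra. }
  { intros s Hs. apply (continuity_pt_comp q Rabs); [apply q_cont, Hs | apply Rcontinuity_abs]. }
  set (B := Rabs (q smax)).
  assert (B_ge0 : 0 <= B) by apply Rabs_pos.
  set (m := Rmin delta (Rmin L (eps / (2 * B + 1)))).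
  assert (m_le : m <= delta /\ m <= L /\ m <= eps / (2 * B + 1)).
  { unfold m. pose proof (Rmin_l delta (Rmin L (eps / (2 * B + 1)))).
    pose proof (Rmin_r delta (Rmin L (eps / (2 * B + 1)))).
    pose proof (Rmin_l L (eps / (2 * B + 1))). pose proof (Rmin_r L (eps / (2 * B + 1))).
    lra. }
  assert (m_gt0 : 0 < m).
  { pose proof (cond_pos delta). pose proof (Rdiv_lt_0_compat eps (2 * B + 1) eps_gt0 ltac:(lra)).
    unfold m. repeat apply Rmin_glb_lt; lra. }
  pose proof PI_RGT_0.
  exists (PI / m). intros lam lam_gt.
  assert (lam_gt0 : 0 < lam) by (pose proof (Rdiv_lt_0_compat PI m ltac:(lra) m_gt0); lra).
  set (d := PI / lam).
  pose proof (Rdiv_lt_of_div_lt PI m lam ltac:(lra) m_gt0 lam_gt) as d_bounds. fold d in d_bounds.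
  assert (small_d : 2 * d * B < eps).
  { apply Rle_lt_trans with (2 * B * (eps / (2 * B + 1))); [nra|].
    apply (Rmult_lt_reg_r (2 * B + 1)); [lra|].
    replace (2 * B * (eps / (2 * B + 1)) * (2 * B + 1)) with (2 * B * eps) by (field; lra).
    nra. }
  assert (first_lt : (L - d) * (eps / L) < eps).
  { replace ((L - d) * (eps / L)) with (eps - d * (eps / L)) by (field; lra).
    pose proof (Rmult_lt_0_compat d (eps / L) ltac:(lra) (Rdiv_lt_0_compat _ _ eps_gt0 L_gt0)).
    lra. }
  pose proof (RInt_sin_bound lam (eps / L) B lam_gt0 ltac:(fold d; lra)) as bound.
  fold d in bound. rewrite Rminus_0_r.
  enough (2 * Rabs (RInt (fun s => q s * sin (lam * s)) 0 L) < 2 * eps) by lra.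
  eapply Rle_lt_trans; [apply bound | lra].
  - intros s Hs. left. apply q_unif; try lra.
    replace (s - (s + d)) with (- d) by ring. rewrite Rabs_Ropp, Rabs_pos_eq; lra.
  - intros s Hs. apply q_le_max, Hs.
Qed.

End RiemannLebesgue.

(* [f x / x], with the value [l] (meant to be [f'(0)]) at the removable singularity. *)
Definition dquot (f : R -> R) (l x : R) : R := if Req_EM_T x 0 then l else f x / x.

Lemma continuity_pt_dquot (f : R -> R) (l x : R) :
  f 0 = 0 -> derivable_pt_lim f 0 l -> continuity_pt f x -> continuity_pt (dquot f l) x.
Proof.
  intros f0 f'0 f_cont. unfold dquot.
  destruct (Req_EM_T x 0) as [-> | x_neq0].
  - intros eps eps_gt0. destruct (f'0 eps eps_gt0) as [delta Hdelta].
    exists delta. split; [apply cond_pos|]. intros s [[_ s_neq0] s_near]. simpl in *.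
    unfold R_dist in *. rewrite Rminus_0_r in s_near.
    destruct (Req_EM_T s 0) as [E | _]; [congruence|].
    destruct (Req_EM_T 0 0) as [_ | E]; [|congruence].
    specialize (Hdelta s (not_eq_sym s_neq0) s_near). rewrite Rplus_0_l, f0, Rminus_0_r in Hdelta.
    exact Hdelta.
  - apply continuity_pt_locally_ext with (a := Rabs x) (f := fun s => f s / s).
    + apply Rabs_pos_lt, x_neq0.
    + intros s Hs. destruct (Req_EM_T s 0) as [-> | _]; [|reflexivity].
      unfold Rdist in Hs. rewrite Rminus_0_l, Rabs_Ropp in Hs. lra.
    + apply continuity_pt_div; [exact f_cont | apply continuity_pt_id | exact x_neq0].
Qed.

(** * The partial-fraction expansion of cosh *)

Definition weight (t x : R) : R := / (t ^ 2 + PI ^ 2 * x ^ 2).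

Lemma weight_pos (t x : R) : x <> 0 -> 0 < weight t x.
Proof.
  intros x_neq0. apply Rinv_0_lt_compat. pose proof PI_RGT_0.
  assert (0 < x ^ 2) by (rewrite <- Rsqr_pow2; apply Rsqr_pos_lt, x_neq0).
  pose proof (pow2_ge_0 t). pose proof (pow_lt PI 2 ltac:(lra)). nra.
Qed.

Lemma weight_le (t x : R) : x <> 0 -> weight t x <= / (PI ^ 2 * x ^ 2).
Proof.
  intros x_neq0. pose proof PI_RGT_0. apply Rinv_le_contravar.
  - apply Rmult_lt_0_compat; [apply pow_lt; lra|].
    rewrite <- Rsqr_pow2. apply Rsqr_pos_lt, x_neq0.
  - pose proof (pow2_ge_0 t). lra.
Qed.

Lemma weight_le_telescope (t x : R) : 0 < x ->
  weight t (x + 1) <= / PI ^ 2 * (/ x - / (x + 1)).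
Proof.
  intros x_gt0. pose proof PI_RGT_0.
  eapply Rle_trans; [apply weight_le, Rgt_not_eq; lra |].
  replace (/ PI ^ 2 * (/ x - / (x + 1))) with (/ (PI ^ 2 * (x * (x + 1)))) by (field; lra).
  apply Rinv_le_contravar; [apply Rmult_lt_0_compat; [apply pow_lt|]; nra |].
  apply Rmult_le_compat_l; [left; apply pow_lt; lra | nra].
Qed.

Lemma weight_opp (t x : R) : weight t (- x) = weight t x.
Proof. unfold weight. f_equal. ring. Qed.

Definition dirichlet (N : nat) (s : R) : R :=
  1 + 2 * sum_n_m (fun k => cos (2 * PI * INR k * s)) 1 N.

Lemma dirichlet_mul_sin (N : nat) (s : R) :
  dirichlet N s * sin (PI * s) = sin ((2 * INR N + 1) * PI * s).
Proof.
  unfold dirichlet. induction N as [| N IH].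
  - rewrite sum_n_m_1_O.
    replace ((2 * INR 0 + 1) * PI * s) with (PI * s) by (simpl; ring). ring.
  - rewrite sum_n_m_1_S.
    set (sum_cos := sum_n_m (fun k => cos (2 * PI * INR k * s)) 1 N) in IH |- *.
    replace ((1 + 2 * (sum_cos + cos (2 * PI * INR (S N) * s))) * sin (PI * s))
      with ((1 + 2 * sum_cos) * sin (PI * s) + 2 * cos (2 * PI * INR (S N) * s) * sin (PI * s))
      by ring.
    rewrite IH, S_INR.
    set (x := 2 * PI * (INR N + 1) * s). set (z := PI * s).
    replace ((2 * INR N + 1) * PI * s) with (x - z) by (unfold x, z; ring).
    replace ((2 * (INR N + 1) + 1) * PI * s) with (x + z) by (unfold x, z; ring).
    rewrite sin_plus, sin_minus. ring.
Qed.

Lemma is_RInt_cosh_cos (t c : R) : 0 < t ->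
  is_RInt (fun s => cosh (t * (2 * s - 1)) * cos (c * s)) 0 (1 / 2)
    ((2 * t * sinh t + c * sin (c / 2)) / (4 * t ^ 2 + c ^ 2)).
Proof.
  intros t_gt0. assert (denom_pos : 0 < 4 * (t * t) + c * c) by nra.
  set (F := fun s => (2 * t * sinh (t * (2 * s - 1)) * cos (c * s)
                      + c * cosh (t * (2 * s - 1)) * sin (c * s)) / (4 * t ^ 2 + c ^ 2)).
  replace ((2 * t * sinh t + c * sin (c / 2)) / (4 * t ^ 2 + c ^ 2)) with (F (1 / 2) - F 0).
  - apply (is_RInt_derive (V := R_CompleteNormedModule) F).
    + intros s _. unfold F, sinh, cosh. auto_derive; [simpl; lra|].
      replace (t * (2 * s + - (1))) with (t * (2 * s - 1)) by ring.
      field. simpl. lra.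
    + intros s _. apply (ex_derive_continuous (V := R_NormedModule)).
      unfold cosh. auto_derive. auto.
  - unfold F, sinh, cosh.
    replace (t * (2 * (1 / 2) - 1)) with 0 by field.
    replace (t * (2 * 0 - 1)) with (- t) by ring.
    rewrite Ropp_involutive, Ropp_0, exp_0, !Rmult_0_r, sin_0, cos_0.
    replace (c * (1 / 2)) with (c / 2) by field.
    field. simpl. lra.
Qed.

Definition cosh_gap (t s : R) : R := cosh (t * (2 * s - 1)) - cosh t.

(* [t sinh t] times a partial sum of coth t / t = 1/t^2 + 2 sum_{k>=1} weight t k. *)
Definition cosh_approx (t : R) (N : nat) : R :=
  t * sinh t * (weight t 0 + 2 * sum_n_m (fun k => weight t (INR k)) 1 N).

Lemma is_RInt_cosh_gap (t : R) : 0 < t ->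
  is_RInt (cosh_gap t) 0 (1 / 2) ((t * sinh t * weight t 0 - cosh t) / 2).
Proof.
  intros t_gt0.
  replace ((t * sinh t * weight t 0 - cosh t) / 2)
    with ((2 * t * sinh t + 0 * sin (0 / 2)) / (4 * t ^ 2 + 0 ^ 2) - (1 / 2 - 0) * cosh t)
    by (unfold weight; field; apply Rgt_not_eq; lra).
  apply (is_RInt_ext_R (fun s => cosh (t * (2 * s - 1)) * cos (0 * s) - cosh t)).
  { intros s _. unfold cosh_gap. rewrite Rmult_0_l, cos_0. ring. }
  apply is_RInt_minus_R; [apply is_RInt_cosh_cos, t_gt0 | apply is_RInt_const_R].
Qed.

Lemma is_RInt_cosh_gap_cos (t : R) (k : nat) : 0 < t -> (1 <= k)%nat ->
  is_RInt (fun s => cosh_gap t s * cos (2 * PI * INR k * s)) 0 (1 / 2)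
    (t * sinh t / 2 * weight t (INR k)).
Proof.
  intros t_gt0 k_ge1. set (c := 2 * PI * INR k).
  assert (c_gt0 : 0 < c).
  { unfold c. pose proof PI_RGT_0. pose proof (lt_0_INR k ltac:(lia)). nra. }
  assert (sin_half_c : sin (c / 2) = 0).
  { apply sin_eq_0_1. exists (Z.of_nat k). rewrite <- INR_IZR_INZ. unfold c. field. }
  replace (t * sinh t / 2 * weight t (INR k))
    with ((2 * t * sinh t + c * sin (c / 2)) / (4 * t ^ 2 + c ^ 2)
          - cosh t * (sin (c * (1 / 2)) / c - sin (c * 0) / c)).
  - apply (is_RInt_ext_R (fun s => cosh (t * (2 * s - 1)) * cos (c * s) - cosh t * cos (c * s))).
    { intros s _. unfold cosh_gap. ring. }
    apply is_RInt_minus_R; [apply is_RInt_cosh_cos, t_gt0 |].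
    apply is_RInt_scal_R, (is_RInt_derive (V := R_CompleteNormedModule) (fun s => sin (c * s) / c)).
    + intros s _. auto_derive; [lra|]. field. lra.
    + intros s _. apply (ex_derive_continuous (V := R_NormedModule)). auto_derive. auto.
  - replace (c * (1 / 2)) with (c / 2) by field.
    rewrite sin_half_c, Rmult_0_r, sin_0.
    unfold weight, c. pose proof PI_RGT_0.
    pose proof (lt_0_INR k ltac:(lia)). field. repeat split; apply Rgt_not_eq; nra.
Qed.

Lemma is_RInt_cosh_gap_dirichlet (t : R) (N : nat) : 0 < t ->
  is_RInt (fun s => cosh_gap t s * dirichlet N s) 0 (1 / 2) ((cosh_approx t N - cosh t) / 2).
Proof.
  intros t_gt0.
  replace ((cosh_approx t N - cosh t) / 2)
    with ((t * sinh t * weight t 0 - cosh t) / 2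
          + 2 * sum_n_m (fun k => t * sinh t / 2 * weight t (INR k)) 1 N).
  - apply (is_RInt_ext_R (fun s => cosh_gap t s
             + 2 * sum_n_m (fun k => cosh_gap t s * cos (2 * PI * INR k * s)) 1 N)).
    { intros s _. unfold dirichlet. rewrite sum_n_m_mult_l_R. ring. }
    apply is_RInt_plus_R; [apply is_RInt_cosh_gap, t_gt0 |].
    apply is_RInt_scal_R, is_RInt_sum_n_m_1. intros k k_ge1.
    apply is_RInt_cosh_gap_cos; assumption.
  - unfold cosh_approx. rewrite sum_n_m_mult_l_R. field.
Qed.

(* Since [dirichlet N s * sin (PI * s) = sin ((2N+1) PI s)], integrating [cosh_gap]
   against the Dirichlet kernel is a Riemann-Lebesgue integral of this quotient. *)
Definition cosh_gap_quot (t s : R) : R :=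
  dquot (cosh_gap t) (- 2 * t * sinh t) s / dquot (fun s => sin (PI * s)) PI s.

Lemma sin_PI_mul_pos (s : R) : 0 < s <= 1 / 2 -> 0 < sin (PI * s).
Proof.
  intros Hs. pose proof PI_RGT_0. apply sin_gt_0; nra.
Qed.

Lemma continuity_pt_cosh_gap_quot (t s : R) : 0 <= s <= 1 / 2 ->
  continuity_pt (cosh_gap_quot t) s.
Proof.
  intros Hs. unfold cosh_gap_quot. apply continuity_pt_div.
  - apply continuity_pt_dquot.
    + unfold cosh_gap. replace (t * (2 * 0 - 1)) with (- t) by ring.
      unfold cosh. rewrite Ropp_involutive. field.
    + apply is_derive_Reals. unfold cosh_gap, cosh, sinh. auto_derive; auto.
      replace (t * (2 * 0 + - (1))) with (- t) by ring. rewrite Ropp_involutive. field.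
    + apply derivable_continuous_pt, ex_derive_Reals_0. unfold cosh_gap, cosh.
      auto_derive. auto.
  - apply continuity_pt_dquot.
    + rewrite Rmult_0_r. apply sin_0.
    + apply is_derive_Reals. auto_derive; auto. rewrite Rmult_0_r, cos_0. ring.
    + apply derivable_continuous_pt, ex_derive_Reals_0. auto_derive. auto.
  - apply Rgt_not_eq. unfold dquot. destruct (Req_EM_T s 0); [apply PI_RGT_0|].
    apply Rdiv_lt_0_compat; [apply sin_PI_mul_pos|]; lra.
Qed.

Lemma cosh_gap_quot_mul_sin (t s : R) (N : nat) : 0 < s < 1 / 2 ->
  cosh_gap_quot t s * sin ((2 * INR N + 1) * PI * s) = cosh_gap t s * dirichlet N s.
Proof.
  intros Hs. rewrite <- dirichlet_mul_sin. unfold cosh_gap_quot, dquot.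
  destruct (Req_EM_T s 0); [lra|].
  assert (0 < sin (PI * s)) by (apply sin_PI_mul_pos; lra).
  field. split; apply Rgt_not_eq; lra.
Qed.

Theorem is_lim_seq_cosh_approx (t : R) : 0 < t -> is_lim_seq (cosh_approx t) (cosh t).
Proof.
  intros t_gt0.
  assert (freq_lim : is_lim_seq (fun N => (2 * INR N + 1) * PI) p_infty).
  { apply (is_lim_seq_le_p_loc INR); [| apply is_lim_seq_INR].
    exists 0%nat. intros N _. pose proof PI2_1. pose proof (pos_INR N). nra. }
  pose proof (is_lim_comp_seq _ _ _ _
                (riemann_lebesgue (cosh_gap_quot t) (1 / 2)
                   (continuity_pt_cosh_gap_quot t) ltac:(lra))
                ltac:(exists 0%nat; intros; discriminate) freq_lim) as lim0.
  apply (is_lim_seq_ext (fun N => cosh t + 2 * ((cosh_approx t N - cosh t) / 2))).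
  { intros N. field. }
  replace (Finite (cosh t)) with (Finite (cosh t + 2 * 0)) by (f_equal; ring).
  apply is_lim_seq_plus'; [apply is_lim_seq_const |].
  apply is_lim_seq_mult'; [apply is_lim_seq_const |].
  refine (is_lim_seq_ext _ _ _ _ lim0).
  intros N. simpl. apply is_RInt_unique.
  apply (is_RInt_ext_R (fun s => cosh_gap t s * dirichlet N s));
    [| apply is_RInt_cosh_gap_dirichlet, t_gt0].
  intros s Hs. rewrite Rmin_left, Rmax_right in Hs by lra.
  symmetry. apply cosh_gap_quot_mul_sin, Hs.
Qed.

Lemma cosh_approx_S (t : R) (N : nat) :
  cosh_approx t (S N) = cosh_approx t N + 2 * t * sinh t * weight t (INR (S N)).
Proof. unfold cosh_approx. rewrite sum_n_m_1_S. ring. Qed.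

Lemma cosh_approx_increment (t : R) (N j : nat) : 0 < t -> (1 <= N)%nat ->
  0 <= cosh_approx t (N + j) - cosh_approx t N
    <= 2 * t * sinh t / PI ^ 2 * (/ INR N - / INR (N + j)).
Proof.
  intros t_gt0 N_ge1. pose proof PI_RGT_0.
  pose proof (sinh_pos t t_gt0).
  assert (c_ge0 : 0 <= 2 * t * sinh t) by nra.
  induction j as [| j IH].
  - rewrite Nat.add_0_r. lra.
  - rewrite Nat.add_succ_r, cosh_approx_S, S_INR.
    assert (Nj_gt0 : 0 < INR (N + j)) by (apply lt_0_INR; lia).
    pose proof (weight_pos t (INR (N + j) + 1) ltac:(apply Rgt_not_eq; lra)).
    pose proof (weight_le_telescope t (INR (N + j)) Nj_gt0).
    assert (0 <= 2 * t * sinh t * weight t (INR (N + j) + 1)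
              <= 2 * t * sinh t / PI ^ 2 * (/ INR (N + j) - / (INR (N + j) + 1))).
    { split; [nra|].
      replace (2 * t * sinh t / PI ^ 2 * (/ INR (N + j) - / (INR (N + j) + 1)))
        with (2 * t * sinh t * (/ PI ^ 2 * (/ INR (N + j) - / (INR (N + j) + 1))))
        by (unfold Rdiv; ring).
      apply Rmult_le_compat_l; assumption. }
    lra.
Qed.

Lemma cosh_approx_tail (t : R) (N : nat) : 0 < t -> (1 <= N)%nat ->
  0 <= cosh t - cosh_approx t N <= 2 * t * sinh t / (PI ^ 2 * INR N).
Proof.
  intros t_gt0 N_ge1. pose proof PI_RGT_0.
  assert (N_gt0 : 0 < INR N) by (apply lt_0_INR; lia).
  assert (shifted : is_lim_seq (fun j => cosh_approx t (N + j)) (cosh t)).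
  { apply (is_lim_seq_ext (fun j => cosh_approx t (j + N))); [intros; f_equal; lia|].
    apply is_lim_seq_incr_n, is_lim_seq_cosh_approx, t_gt0. }
  set (c := 2 * t * sinh t / PI ^ 2).
  assert (c_ge0 : 0 <= c).
  { pose proof (sinh_pos t t_gt0). apply Rdiv_le_0_compat; [nra | apply pow_lt; lra]. }
  split.
  - cut (cosh_approx t N <= cosh t); [lra|].
    apply (is_lim_seq_le (fun _ => cosh_approx t N) (fun j => cosh_approx t (N + j))
                         (cosh_approx t N) (cosh t));
      [intros j | apply is_lim_seq_const | exact shifted].
    pose proof (cosh_approx_increment t N j t_gt0 N_ge1). lra.
  - replace (2 * t * sinh t / (PI ^ 2 * INR N)) with (c * / INR N) by (unfold c; field; lra).
    cut (cosh t <= cosh_approx t N + c * / INR N); [lra|].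
    apply (is_lim_seq_le (fun j => cosh_approx t (N + j))
                         (fun _ => cosh_approx t N + c * / INR N)
                         (cosh t) (cosh_approx t N + c * / INR N));
      [intros j | exact shifted | apply is_lim_seq_const].
    pose proof (cosh_approx_increment t N j t_gt0 N_ge1) as incr. fold c in incr.
    assert (0 <= c * / INR (N + j)).
    { apply Rmult_le_pos; [assumption | left; apply Rinv_0_lt_compat, lt_0_INR; lia]. }
    lra.
Qed.

(** * Size of the coefficients *)

Lemma ex_RInt_Cn_integrand (x y : R) : ex_RInt (fun t => t * sinh t * weight t x) 0 y.
Proof.
  destruct (Req_EM_T x 0) as [-> | x_neq0].
  - apply (ex_RInt_ext_R (dquot sinh 1)).
    { intros t Ht. assert (t_neq0 : t <> 0).
      { intros ->. destruct (Rle_dec 0 y);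
          [rewrite Rmin_left in Ht | rewrite Rmax_left in Ht]; lra. }
      unfold dquot, weight. destruct (Req_EM_T t 0) as [| _]; [contradiction|].
      replace (t ^ 2 + PI ^ 2 * 0 ^ 2) with (t * t) by ring.
      field. exact t_neq0. }
    apply (ex_RInt_continuous (V := R_CompleteNormedModule)). intros t _.
    apply continuous_of_continuity_pt, continuity_pt_dquot.
    + apply sinh_0.
    + rewrite <- cosh_0. apply derivable_pt_lim_sinh.
    + apply derivable_continuous_pt, derivable_pt_sinh.
  - apply (ex_RInt_continuous (V := R_CompleteNormedModule)). intros t _.
    apply (ex_derive_continuous (V := R_NormedModule)).
    unfold weight, sinh. auto_derive.
    apply Rgt_not_eq. pose proof PI_RGT_0.
    assert (0 < x * x) by (apply Rsqr_pos_lt, x_neq0).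
    assert (0 <= t * t) by apply Rle_0_sqr.
    assert (0 < PI * PI * (x * x)) by (apply Rmult_lt_0_compat; nra).
    rewrite !Rmult_1_r. lra.
Qed.

Lemma Cn_weight (j : Z) (y : R) :
  Cn j y = RInt (fun t => t * sinh t * weight t (IZR j)) 0 y.
Proof. reflexivity. Qed.

Lemma Cn_bound (j : Z) (y : R) : 0 < y -> IZR j <> 0 ->
  Rabs (Cn j y) <= y ^ 2 * sinh y / (PI ^ 2 * IZR j ^ 2).
Proof.
  intros y_gt0 j_neq0. pose proof PI_RGT_0.
  assert (j2_pos : 0 < PI ^ 2 * IZR j ^ 2).
  { apply Rmult_lt_0_compat; [apply pow_lt; lra|].
    rewrite <- Rsqr_pow2. apply Rsqr_pos_lt, j_neq0. }
  replace (y ^ 2 * sinh y / (PI ^ 2 * IZR j ^ 2))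
    with ((y - 0) * (y * sinh y * / (PI ^ 2 * IZR j ^ 2))) by (field; lra).
  rewrite Cn_weight. apply abs_RInt_le_const; [lra | apply ex_RInt_Cn_integrand |].
  intros t Ht. pose proof (mul_sinh_le t y Ht). pose proof (weight_pos t (IZR j) j_neq0).
  rewrite Rabs_pos_eq by (apply Rmult_le_pos; lra).
  apply Rmult_le_compat; try lra. apply weight_le, j_neq0.
Qed.

Lemma Cn_div_le (j : Z) (y x : R) : 0 < y -> 1 <= x -> x <= 2 * Rabs (IZR j) ->
  Rabs (Cn j y / x) <= 4 * (y ^ 2 * sinh y / PI ^ 2) / x ^ 2.
Proof.
  intros y_gt0 x_ge1 j_large. pose proof PI_RGT_0. pose proof (sinh_pos y y_gt0).
  assert (j_sq : x ^ 2 <= 4 * IZR j ^ 2).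
  { assert (Rabs (IZR j) * Rabs (IZR j) = IZR j * IZR j)
      by (rewrite <- Rabs_mult; apply Rabs_pos_eq, Rle_0_sqr).
    nra. }
  assert (j_neq0 : IZR j <> 0) by (intros j0; rewrite j0 in j_sq; nra).
  apply Rle_trans with (Rabs (Cn j y)).
  { unfold Rdiv. rewrite Rabs_mult, Rabs_inv, (Rabs_pos_eq x) by lra.
    rewrite <- (Rmult_1_r (Rabs (Cn j y))) at 2.
    apply Rmult_le_compat_l; [apply Rabs_pos|]. rewrite <- Rinv_1.
    apply Rinv_le_contravar; lra. }
  eapply Rle_trans; [apply Cn_bound; assumption|].
  replace (4 * (y ^ 2 * sinh y / PI ^ 2) / x ^ 2)
    with (y ^ 2 * sinh y / (PI ^ 2 * (x ^ 2 / 4))) by (field; lra).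
  unfold Rdiv. apply Rmult_le_compat_l; [pose proof (pow2_ge_0 y); nra|].
  apply Rinv_le_contravar; [apply Rmult_lt_0_compat; [apply pow_lt|]; nra|].
  apply Rmult_le_compat_l; [apply pow2_ge_0 | lra].
Qed.

Lemma ex_series_Cn_div (y : R) (j : nat -> Z) (a : R) : 0 < y ->
  (forall k, INR (S k) <= Rabs (IZR (j k)) + a) ->
  ex_series (fun k => Rabs (Cn (j k) y / INR (S k))).
Proof.
  intros y_gt0 j_grows.
  destruct (INR_unbounded (2 * a)) as [K K_large].
  apply (ex_series_incr_n _ K).
  set (c := 4 * (y ^ 2 * sinh y / PI ^ 2)).
  apply (ex_series_le_R _ (fun k => c * / INR (S k) ^ 2));
    [| apply (ex_series_scal_l (V := R_NormedModule) c), ex_series_inv_sq].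
  intros k. rewrite Rabs_Rabsolu.
  pose proof (j_grows (K + k)%nat) as jK.
  assert (x_ge : 1 <= INR (S k) <= INR (S (K + k)) /\ 2 * a < INR (S (K + k))).
  { rewrite !S_INR, plus_INR. pose proof (pos_INR k). pose proof (pos_INR K). lra. }
  eapply Rle_trans; [apply Cn_div_le; [assumption | lra | lra]|].
  fold c. apply Rmult_le_compat_l.
  - pose proof PI_RGT_0. pose proof (sinh_pos y y_gt0). pose proof (pow2_ge_0 y).
    unfold c. apply Rmult_le_pos; [lra|]. apply Rdiv_le_0_compat; [nra | apply pow_lt; lra].
  - apply Rinv_le_contravar; [apply pow_lt; lra|]. apply pow_incr. lra.
Qed.

(** * Positive indices *)

(* The pairs [h (p - m) + h (p + m)], 1 <= m <= N, cover the window [p - N, p + N]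
   except p; this is the cost of moving that window to [-N, N]. *)
Definition pair_boundary (h : R -> R) (p N : nat) : R :=
  sum_n_m (fun i => h (INR N + INR i) - h (INR i - 1 - INR N)) 1 p.

Lemma pair_boundary_S (h : R -> R) (p N : nat) :
  pair_boundary h p (S N)
  = pair_boundary h p N + (h (INR N + 1 + INR p) - h (INR N + 1))
    + (h (INR p - 1 - INR N) - h (- 1 - INR N)).
Proof.
  transitivity (pair_boundary h p N
    + sum_n_m (fun i => h (INR N + 1 + INR i) - h (INR N + 1 + (INR i - 1))) 1 p
    + sum_n_m (fun i => h (INR i - 1 - INR N) - h (INR i - 1 - 1 - INR N)) 1 p).
  - unfold pair_boundary. rewrite <- !sum_n_m_plus_R. apply sum_n_m_ext_R. intros i _.
    rewrite S_INR.
    replace (INR N + 1 + (INR i - 1)) with (INR N + INR i) by ring.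
    replace (INR i - 1 - 1 - INR N) with (INR i - 1 - (INR N + 1)) by ring.
    ring.
  - rewrite (sum_n_m_telescope (fun x => h (INR N + 1 + x))).
    rewrite (sum_n_m_telescope (fun x => h (x - 1 - INR N))).
    rewrite Rplus_0_r. replace (0 - 1 - INR N) with (- 1 - INR N) by ring. ring.
Qed.

Lemma sum_shifted_pairs (h : R -> R) (p N : nat) :
  sum_n_m (fun m => h (INR p - INR m) + h (INR p + INR m)) 1 N
  = sum_n_m (fun m => h (INR m) + h (- INR m)) 1 N + h 0 - h (INR p) + pair_boundary h p N :> R.
Proof.
  induction N as [| N IH].
  - unfold pair_boundary. rewrite !sum_n_m_1_O.
    rewrite (sum_n_m_ext_R _ (fun i => h (INR i) - h (INR i - 1)))
      by (intros i _; simpl; f_equal; f_equal; ring).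
    rewrite sum_n_m_telescope. ring.
  - rewrite !sum_n_m_1_S, IH, pair_boundary_S, S_INR.
    replace (INR p - (INR N + 1)) with (INR p - 1 - INR N) by ring.
    replace (INR p + (INR N + 1)) with (INR N + 1 + INR p) by ring.
    replace (- (INR N + 1)) with (- 1 - INR N) by ring.
    ring.
Qed.

Definition affine_weight (t a x : R) : R := (a + x) * weight t x.

Lemma weight_pair_div (t a m : R) : 0 < t -> m <> 0 ->
  (weight t (a - m) - weight t (a + m)) / m
  = PI ^ 2 * weight t a * (affine_weight t a (a - m) + affine_weight t a (a + m)).
Proof.
  intros t_gt0 m_neq0. unfold affine_weight, weight.
  assert (denom_pos : forall x, 0 < t ^ 2 + PI ^ 2 * x ^ 2).
  { intros x. pose proof (pow_lt t 2 t_gt0). pose proof (pow2_ge_0 (PI * x)).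
    replace (PI ^ 2 * x ^ 2) with ((PI * x) ^ 2) by ring. lra. }
  pose proof (denom_pos a). pose proof (denom_pos (a - m)). pose proof (denom_pos (a + m)).
  field. repeat split; try exact m_neq0; apply Rgt_not_eq; lra.
Qed.

Definition hilb_integrand (p N : nat) (t : R) : R :=
  sum_n_m (fun m => t * sinh t * (weight t (INR p - INR m) - weight t (INR p + INR m)) / INR m) 1 N.

(* The derivative of [PI ^ 2 * p * sinh t * weight t p]. *)
Definition hilb_limit_integrand (p : nat) (t : R) : R :=
  PI ^ 2 * INR p * weight t (INR p) * (cosh t - 2 * t * sinh t * weight t (INR p)).

Lemma hilb_integrand_gap (t : R) (p N : nat) : 0 < t ->
  hilb_integrand p N t - hilb_limit_integrand p t
  = PI ^ 2 * weight t (INR p) * (INR p * (cosh_approx t N - cosh t)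
                                 + t * sinh t * pair_boundary (affine_weight t (INR p)) p N).
Proof.
  intros t_gt0. set (h := affine_weight t (INR p)).
  unfold hilb_integrand.
  rewrite (sum_n_m_ext_R _ (fun m => PI ^ 2 * t * sinh t * weight t (INR p)
                                     * (h (INR p - INR m) + h (INR p + INR m)))).
  2: { intros m Hm. unfold Rdiv. rewrite Rmult_assoc.
       fold (Rdiv (weight t (INR p - INR m) - weight t (INR p + INR m)) (INR m)).
       rewrite weight_pair_div; [unfold h; ring | exact t_gt0 | apply not_0_INR; lia]. }
  rewrite sum_n_m_mult_l_R, (sum_shifted_pairs h p N).
  rewrite (sum_n_m_ext_R _ (fun m => 2 * INR p * weight t (INR m)))
    by (intros m _; unfold h, affine_weight; rewrite weight_opp; ring).
  rewrite sum_n_m_mult_l_R.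
  unfold h, affine_weight, hilb_limit_integrand, cosh_approx. ring.
Qed.

Lemma mul_weight_le (t a x L : R) : 0 < L <= x -> 0 <= a <= 2 * x ->
  0 <= a * weight t x <= 2 / (PI ^ 2 * L).
Proof.
  intros HL Ha. pose proof PI_RGT_0.
  pose proof (weight_pos t x ltac:(apply Rgt_not_eq; lra)).
  pose proof (weight_le t x ltac:(apply Rgt_not_eq; lra)).
  split; [apply Rmult_le_pos; lra|].
  apply Rle_trans with (2 * x * / (PI ^ 2 * x ^ 2)); [apply Rmult_le_compat; lra|].
  replace (2 * x * / (PI ^ 2 * x ^ 2)) with (2 / (PI ^ 2 * x)) by (field; lra).
  unfold Rdiv. apply Rmult_le_compat_l; [lra|].
  apply Rinv_le_contravar; [apply Rmult_lt_0_compat; [apply pow_lt|]; lra|].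
  apply Rmult_le_compat_l; [apply pow2_ge_0 | lra].
Qed.

Lemma pair_boundary_bound (t : R) (p N : nat) : (2 * p <= N)%nat -> (1 <= N)%nat ->
  0 <= pair_boundary (affine_weight t (INR p)) p N <= INR p * (6 / (PI ^ 2 * INR N)).
Proof.
  intros N_large N_ge1. apply sum_n_m_1_bound. intros i Hi. pose proof PI_RGT_0.
  assert (i_le : 1 <= INR i <= INR p) by (split; [apply (le_INR 1) | apply le_INR]; lia).
  assert (N_ge : 2 * INR p <= INR N).
  { replace (2 * INR p) with (INR (2 * p)) by (rewrite mult_INR; simpl; ring).
    apply le_INR, N_large. }
  assert (N_gt0 : 0 < INR N) by (apply lt_0_INR; lia).
  unfold affine_weight.
  pose proof (mul_weight_le t (INR p + (INR N + INR i)) (INR N + INR i) (INR N)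
                ltac:(lra) ltac:(lra)).
  replace (INR i - 1 - INR N) with (- (INR N + 1 - INR i)) by ring. rewrite weight_opp.
  pose proof (mul_weight_le t (INR N + 1 - INR i - INR p) (INR N + 1 - INR i) (INR N / 2)
                ltac:(lra) ltac:(lra)).
  replace (6 / (PI ^ 2 * INR N)) with (2 / (PI ^ 2 * INR N) + 2 / (PI ^ 2 * (INR N / 2)))
    by (field; lra).
  replace ((INR p + - (INR N + 1 - INR i)) * weight t (INR N + 1 - INR i))
    with (- ((INR N + 1 - INR i - INR p) * weight t (INR N + 1 - INR i))) by ring.
  lra.
Qed.

Lemma hilb_integrand_gap_bound (t y : R) (p N : nat) :
  0 < t <= y -> (1 <= p)%nat -> (2 * p <= N)%nat ->
  Rabs (hilb_integrand p N t - hilb_limit_integrand p t)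
    <= 8 * INR p * (y * sinh y) / (PI ^ 2 * INR N).
Proof.
  intros Ht p_ge1 N_large. rewrite hilb_integrand_gap by lra.
  pose proof PI_RGT_0.
  assert (N_gt0 : 0 < INR N) by (apply lt_0_INR; lia).
  assert (p_ge1' : 1 <= INR p) by (apply (le_INR 1); lia).
  pose proof (mul_sinh_le t y ltac:(lra)) as ts_le.
  pose proof (cosh_approx_tail t N ltac:(lra) ltac:(lia)) as tail.
  pose proof (pair_boundary_bound t p N N_large ltac:(lia)) as bnd.
  set (B := pair_boundary (affine_weight t (INR p)) p N) in *.
  assert (scale : 0 <= PI ^ 2 * weight t (INR p) <= 1).
  { pose proof (weight_pos t (INR p) ltac:(apply Rgt_not_eq; lra)).
    pose proof (weight_le t (INR p) ltac:(apply Rgt_not_eq; lra)).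
    split; [apply Rmult_le_pos; [apply pow2_ge_0 | lra]|].
    apply Rle_trans with (PI ^ 2 * / (PI ^ 2 * INR p ^ 2));
      [apply Rmult_le_compat_l; [apply pow2_ge_0 | assumption]|].
    replace (PI ^ 2 * / (PI ^ 2 * INR p ^ 2)) with (/ INR p ^ 2) by (field; lra).
    rewrite <- Rinv_1. apply Rinv_le_contravar; [lra | nra]. }
  set (c := y * sinh y / (PI ^ 2 * INR N)).
  assert (c_ge : t * sinh t / (PI ^ 2 * INR N) <= c).
  { unfold c, Rdiv. apply Rmult_le_compat_r; [|lra].
    left. apply Rinv_0_lt_compat, Rmult_lt_0_compat; [apply pow_lt|]; lra. }
  assert (inner : Rabs (INR p * (cosh_approx t N - cosh t) + t * sinh t * B) <= 8 * INR p * c).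
  { assert (tail' : 0 <= cosh t - cosh_approx t N <= 2 * c).
    { replace (2 * t * sinh t / (PI ^ 2 * INR N)) with (2 * (t * sinh t / (PI ^ 2 * INR N)))
        in tail by (unfold Rdiv; ring). lra. }
    assert (B' : 0 <= t * sinh t * B <= 6 * INR p * c).
    { split; [apply Rmult_le_pos; lra|].
      replace (6 * INR p * c) with (y * sinh y * (INR p * (6 / (PI ^ 2 * INR N))))
        by (unfold c; field; lra).
      apply Rmult_le_compat; lra. }
    apply Rabs_le. nra. }
  rewrite Rabs_mult, Rabs_pos_eq by lra.
  replace (8 * INR p * (y * sinh y) / (PI ^ 2 * INR N)) with (1 * (8 * INR p * c))
    by (unfold c; field; lra).
  apply Rmult_le_compat; try lra. apply Rabs_pos.
Qed.

Lemma is_RInt_hilb_limit_integrand (p : nat) (y : R) : (1 <= p)%nat ->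
  is_RInt (hilb_limit_integrand p) 0 y (PI ^ 2 * INR p * sinh y * weight y (INR p)).
Proof.
  intros p_ge1. pose proof PI_RGT_0.
  assert (denom_pos : forall t, 0 < t ^ 2 + PI ^ 2 * INR p ^ 2).
  { intros t. pose proof (pow2_ge_0 t). pose proof (lt_0_INR p ltac:(lia)).
    assert (0 < PI ^ 2 * INR p ^ 2) by (apply Rmult_lt_0_compat; apply pow_lt; lra). lra. }
  replace (PI ^ 2 * INR p * sinh y * weight y (INR p))
    with (PI ^ 2 * INR p * sinh y * weight y (INR p) - PI ^ 2 * INR p * sinh 0 * weight 0 (INR p))
    by (rewrite sinh_0; ring).
  apply (is_RInt_derive (V := R_CompleteNormedModule)
           (fun t => PI ^ 2 * INR p * sinh t * weight t (INR p))).
  - intros t _. pose proof (denom_pos t).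
    unfold hilb_limit_integrand, weight, sinh, cosh. auto_derive; [lra|].
    field. lra.
  - intros t _. pose proof (denom_pos t). apply (ex_derive_continuous (V := R_NormedModule)).
    unfold hilb_limit_integrand, weight, sinh, cosh. auto_derive. repeat split; lra.
Qed.

Lemma is_RInt_hilb_integrand (p N : nat) (y : R) :
  is_RInt (hilb_integrand p N) 0 y (sum_n_m (hilb_pair (Z.of_nat p) y) 1 N).
Proof.
  apply is_RInt_sum_n_m_1. intros m m_ge1. unfold hilb_pair.
  rewrite !Cn_weight, minus_IZR, plus_IZR, <- !INR_IZR_INZ.
  unfold Rdiv. rewrite (Rmult_comm (RInt _ _ _ - RInt _ _ _)).
  apply (is_RInt_ext_R (fun t => / INR m * (t * sinh t * weight t (INR p - INR m)
                                           - t * sinh t * weight t (INR p + INR m)))).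
  { intros t _. ring. }
  apply is_RInt_scal_R, is_RInt_minus_R;
    apply (RInt_correct (V := R_CompleteNormedModule)), ex_RInt_Cn_integrand.
Qed.

Lemma Dn_of_nat (p : nat) (y : R) : (1 <= p)%nat ->
  Dn (Z.of_nat p) y = / PI * (PI ^ 2 * INR p * sinh y * weight y (INR p)).
Proof.
  intros p_ge1. unfold Dn. destruct (Z.eqb_spec (Z.of_nat p) 0) as [E | _]; [lia|].
  rewrite <- INR_IZR_INZ. unfold weight. pose proof PI_RGT_0.
  pose proof (lt_0_INR p ltac:(lia)). pose proof (pow2_ge_0 y).
  assert (0 < PI ^ 2 * INR p ^ 2) by (apply Rmult_lt_0_compat; apply pow_lt; lra).
  field. repeat split; apply Rgt_not_eq; lra.
Qed.

Theorem is_lim_seq_hilb_partial_of_nat (p : nat) (y : R) : 0 < y -> (1 <= p)%nat ->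
  is_lim_seq (hilb_partial (Z.of_nat p) y) (Dn (Z.of_nat p) y).
Proof.
  intros y_gt0 p_ge1. pose proof PI_RGT_0.
  apply (is_lim_seq_of_rate _ _ (/ PI * (y * (8 * INR p * (y * sinh y) / PI ^ 2))) (2 * p)).
  intros N N_large.
  assert (N_gt0 : 0 < INR N) by (apply lt_0_INR; lia).
  assert (gap_int : is_RInt (fun t => hilb_integrand p N t - hilb_limit_integrand p t) 0 y
                      (sum_n_m (hilb_pair (Z.of_nat p) y) 1 N
                       - PI ^ 2 * INR p * sinh y * weight y (INR p))).
  { apply is_RInt_minus_R;
      [apply is_RInt_hilb_integrand | apply is_RInt_hilb_limit_integrand, p_ge1]. }
  (* At t = 0 the term m = p of [hilb_integrand] is [0 * sinh 0 * / 0 = 0] instead of its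
     limit 1, hence the bound is only claimed on the open interval. *)
  assert (pointwise : forall t, 0 < t < y -> Rabs (hilb_integrand p N t - hilb_limit_integrand p t)
                         <= 8 * INR p * (y * sinh y) / (PI ^ 2 * INR N)).
  { intros t Ht. apply hilb_integrand_gap_bound; [lra | exact p_ge1 | exact N_large]. }
  pose proof (is_RInt_abs_le_const_open _ _ _ _ _ (Rlt_le _ _ y_gt0) gap_int pointwise) as bound.
  unfold hilb_partial. rewrite Dn_of_nat, <- Rmult_minus_distr_l, Rabs_mult, Rabs_pos_eq
    by (try apply Rlt_le, Rinv_0_lt_compat; assumption).
  replace (/ PI * (y * (8 * INR p * (y * sinh y) / PI ^ 2)) / INR N)
    with (/ PI * ((y - 0) * (8 * INR p * (y * sinh y) / (PI ^ 2 * INR N)))) by (field; lra).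
  apply Rmult_le_compat_l; [apply Rlt_le, Rinv_0_lt_compat; assumption | exact bound].
Qed.

(** * Odd symmetry and the theorem *)

Lemma Cn_opp (j : Z) (y : R) : Cn (- j) y = Cn j y.
Proof.
  unfold Cn. rewrite opp_IZR. replace ((- IZR j) ^ 2) with (IZR j ^ 2) by ring. reflexivity.
Qed.

Lemma hilb_partial_opp (n : Z) (y : R) (N : nat) :
  hilb_partial (- n) y N = - hilb_partial n y N.
Proof.
  unfold hilb_partial.
  rewrite (sum_n_m_ext_R _ (fun m => -1 * hilb_pair n y m)), sum_n_m_mult_l_R; [ring|].
  intros m _. unfold hilb_pair.
  replace (- n - Z.of_nat m)%Z with (- (n + Z.of_nat m))%Z by lia.
  replace (- n + Z.of_nat m)%Z with (- (n - Z.of_nat m))%Z by lia.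
  rewrite !Cn_opp. unfold Rdiv. ring.
Qed.

Lemma Dn_opp (n : Z) (y : R) : Dn (- n) y = - Dn n y.
Proof.
  unfold Dn. destruct (Z.eqb_spec n 0) as [-> | n_neq0]; [simpl; ring|].
  destruct (Z.eqb_spec (- n) 0) as [E | _]; [lia|].
  rewrite opp_IZR. pose proof PI_RGT_0.
  assert (n2_pos : 0 < IZR n ^ 2) by (rewrite <- Rsqr_pow2; apply Rsqr_pos_lt, not_0_IZR, n_neq0).
  pose proof (pow2_ge_0 y). pose proof (pow_lt PI 2 ltac:(lra)).
  replace ((- IZR n) ^ 2) with (IZR n ^ 2) by ring.
  field. repeat split; [| apply not_0_IZR, n_neq0 | apply Rgt_not_eq; lra].
  apply Rgt_not_eq. replace ((PI * IZR n) ^ 2) with (PI ^ 2 * IZR n ^ 2) by ring. nra.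
Qed.

Lemma shift_le_Rabs (x d : R) : 0 <= d -> d <= Rabs (x - d) + Rabs x /\ d <= Rabs (x + d) + Rabs x.
Proof.
  intros d_ge0. rewrite Rabs_minus_sym.
  pose proof (Rle_abs (d - x)). pose proof (Rle_abs (x + d)).
  pose proof (Rle_abs x). pose proof (Rle_abs (- x)). rewrite Rabs_Ropp in *. lra.
Qed.

Theorem lemma3p14 (y : R) (hy : 0 < y) (n : Z) :
  ex_series (fun k : nat => Rabs (Cn (n - Z.of_nat (S k)) y / INR (S k))) /\
  ex_series (fun k : nat => Rabs (Cn (n + Z.of_nat (S k)) y / INR (S k))) /\
  is_lim_seq (hilb_partial n y) (Dn n y).
Proof.
  split; [| split].
  - apply (ex_series_Cn_div y _ (Rabs (IZR n)) hy). intros k.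
    rewrite minus_IZR, <- INR_IZR_INZ. apply shift_le_Rabs, pos_INR.
  - apply (ex_series_Cn_div y _ (Rabs (IZR n)) hy). intros k.
    rewrite plus_IZR, <- INR_IZR_INZ. apply shift_le_Rabs, pos_INR.
  - destruct n as [| q | q].
    + apply (is_lim_seq_ext (fun _ => 0)); [| apply is_lim_seq_const].
      intros N. pose proof (hilb_partial_opp 0 y N). simpl in *. lra.
    + rewrite <- positive_nat_Z. apply is_lim_seq_hilb_partial_of_nat; [exact hy | lia].
    + rewrite <- Pos2Z.opp_pos, <- positive_nat_Z, Dn_opp.
      apply (is_lim_seq_ext (fun N => - hilb_partial (Z.of_nat (Pos.to_nat q)) y N));
        [intros N; symmetry; apply hilb_partial_opp |].
      apply (is_lim_seq_opp _ (Dn (Z.of_nat (Pos.to_nat q)) y)).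
      apply is_lim_seq_hilb_partial_of_nat; [exact hy | lia].
Qed.
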